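(* Let $(X,E,\ell)$ be a uniformly connected edge-labelled directed graph with label alphabet $\Sigma$, equipped with transition probabilities $p(e)\ge\alpha>0$ for all $e\in E$ (for a constant $\alpha$) satisfying $\sum_{e:\,e^-=x}p(e)\le1$ for every $x$. Let $F\subset\Sigma^+$ be a finite, non-empty set which is relatively dense in $(X,E,\ell)$. Then $$\sup_{x,y\in X}\rho_{x,y}(P_F)<\rho(P)\quad\text{strictly.}$$
   Context: $\Sigma$ is a finite alphabet, $\Sigma^+$ the non-empty finite words. Edges $e=(x,a,y)$ have initial vertex $e^-=x$, terminal vertex $e^+=y$ and label $a\in\Sigma$ (two edges with the same endpoints have distinct labels); paths $\pi=e_1\cdots e_n$ (with $e_i^+=e_{i+1}^-$) have labels $\ell(e_1)\cdots\ell(e_n)$. Uniformly connected: for all $x,y$ there is a path from $x$ to $y$, and there is $K$ such that for each edge from $x$ to $y$ there is a path from $y$ to $x$ of length at most $K$. $d^+(x,y)$ is the minimal length of a path from $x$ to $y$; $F$ is relatively dense if there is $D$ such that for each $x$ there are $y$ and $w\in F$ with $d^+(x,y)\le D$ and a path starting at $y$ with label $w$. $P=(p(x,y))$ with $p(x,y)=\sum_{a:(x,a,y)\in E}p(x,a,y)$, $p^{(n)}(x,y)$ its $n$-th matrix power entries, and $\rho(P)=\limsup_n p^{(n)}(x,y)^{1/n}$ (independent of $x,y$). With $\mathbb P(\pi)=\prod_ip(e_i)$, $p_F^{(n)}(x,y)=\sum\mathbb P(\pi)$ over paths $\pi$ of length $n$ from $x$ to $y$ whose label contains no element of $F$ as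 a factor, and $\rho_{x,y}(P_F)=\limsup_n p_F^{(n)}(x,y)^{1/n}$. *)

From HB Require Import structures.
From mathcomp Require Import all_boot all_order all_algebra.
From mathcomp Require Import all_classical all_reals all_analysis.
Set Implicit Arguments. Unset Strict Implicit. Unset Printing Implicit Defensive.
Import Order.TTheory GRing.Theory Num.Theory.
Local Open Scope classical_set_scope.
Local Open Scope ring_scope.

(* Edges are triples (x, a, y) : X * Sigma * X ; the edge set E is a set of
   such triples (so two edges with the same endpoints have distinct labels). *)
Definition edge (X : Type) (Sigma : Type) := (X * Sigma * X)%type.
Definition einit X Sigma (e : edge X Sigma) : X := e.1.1.
Definition elabel X Sigma (e : edge X Sigma) : Sigma := e.1.2.
Definition eterm X Sigma (e : edge X Sigma) : X := e.2.

Fixpoint walk (X Sigma : Type) (E : set (edge X Sigma)) (x y : X)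
  (s : seq (edge X Sigma)) : Prop :=
  match s with
  | [::] => x = y
  | e :: s' => E e /\ einit e = x /\ walk E (eterm e) y s'
  end.

Definition plabel (X Sigma : Type) (s : seq (edge X Sigma)) : seq Sigma :=
  map (@elabel X Sigma) s.

Definition uniformly_connected (X Sigma : Type) (E : set (edge X Sigma)) : Prop :=
  (forall x y : X, exists s, walk E x y s) /\
  (exists K : nat, forall e, E e ->
      exists s, walk E (eterm e) (einit e) s /\ (size s <= K)%N).

Definition rel_dense (X : Type) (Sigma : eqType) (E : set (edge X Sigma))
  (F : seq (seq Sigma)) : Prop :=
  exists D : nat, forall x : X, exists (y : X) (w : seq Sigma),
    w \in F /\ (exists s, walk E x y s /\ (size s <= D)%N) /\
    (exists (z : X) s, walk E y z s /\ plabel s = w).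

Definition avoids (X : Type) (Sigma : eqType) (F : seq (seq Sigma))
  (s : seq (edge X Sigma)) : bool :=
  ~~ has (fun w => infix w (plabel s)) F.

Definition pathP (R : realType) (X Sigma : Type) (p : edge X Sigma -> R)
  (s : seq (edge X Sigma)) : R := \prod_(e <- s) p e.

Definition pn (R : realType) (X : choiceType) (Sigma : finType)
  (E : set (edge X Sigma)) (p : edge X Sigma -> R) (n : nat) (x y : X) : \bar R :=
  \esum_(s in [set s | walk E x y s /\ size s = n]) (pathP p s)%:E.

Definition pFn (R : realType) (X : choiceType) (Sigma : finType)
  (E : set (edge X Sigma)) (p : edge X Sigma -> R) (F : seq (seq Sigma))
  (n : nat) (x y : X) : \bar R :=
  \esum_(s in [set s | walk E x y s /\ size s = n /\ avoids F s]) (pathP p s)%:E.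

Definition root_limsup (R : realType) (a : nat -> \bar R) : \bar R :=
  limn_esup (fun n => poweR (a n) (n%:R)^-1).

Definition rhoP (R : realType) (X : choiceType) (Sigma : finType)
  (E : set (edge X Sigma)) (p : edge X Sigma -> R) (x y : X) : \bar R :=
  root_limsup (fun n => pn E p n x y).

Definition rhoPF (R : realType) (X : choiceType) (Sigma : finType)
  (E : set (edge X Sigma)) (p : edge X Sigma -> R) (F : seq (seq Sigma))
  (x y : X) : \bar R :=
  root_limsup (fun n => pFn E p F n x y).

From Pilot Require Import Defs.
From HB Require Import structures.
From mathcomp Require Import all_boot all_order all_algebra.
From mathcomp Require Import all_classical all_reals all_analysis.
From mathcomp Require Import zify ring lra.
Import Order.TTheory GRing.Theory Num.Theory.
Set Implicit Arguments. Unset Strict Implicit. Unset Printing Implicit Defensive.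
Local Open Scope classical_set_scope.
Local Open Scope ring_scope.

(* Let [a = min alpha 1]. Uniform connectivity and relative density give, at every
   vertex, a cycle of length at most some [M] whose label contains a word of [F].
   Take an [F]-avoiding path of length [n] from [x] to [y], join it to [x0] and [y0]
   by fixed paths [u] and [v], and insert, after any subset of its [n %/ M] blocks of
   length [M], the cycle at the end of the block. The inserted cycles contain
   forbidden factors and the original path does not, so the resulting paths are all
   distinct; since every edge weighs at least [a], their total weight is at least
   [a ^ c (1 + a ^ M) ^ (n %/ M) p_F^(n)(x, y)] with [c = |u| + |v|], and their
   lengths lie in the window [[n + c, 2 n + c]]. Taking [n]-th roots gives
   [rho_{x,y}(P_F) <= rho(P) / (1 + a ^ M) ^ (1 / M)], and [rho(P) >= a > 0]. *)

Lemma catl_inj (T : Type) (s : seq T) : injective (cat s).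
Proof. by move=> t1 t2 /(congr1 (drop (size s))); rewrite !drop_size_cat. Qed.

Lemma cat3_inj (T : Type) (u v s t : seq T) : u ++ s ++ v = u ++ t ++ v -> s = t.
Proof.
move=> e; have st : size s = size t by move/(congr1 size): e; rewrite !size_cat; lia.
move/(congr1 (fun q => take (size s) (drop (size u) q))): e.
by rewrite !drop_size_cat // take_size_cat // st take_size_cat.
Qed.

Section Walks.
Variables (X Sigma : Type) (E : set (edge X Sigma)).
Implicit Types (x y z : X) (s t : seq (edge X Sigma)).

Definition endv x s : X := last x (map (@eterm X Sigma) s).

Lemma walk_cat x z y s t : walk E x z s -> walk E z y t -> walk E x y (s ++ t).
Proof.
elim: s x => [|e s IH] x /=; first by move=> ->.
by case=> Ee [ex /IH st] /st.
Qed.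

Lemma walk_catE x y s t :
  walk E x y (s ++ t) -> walk E x (endv x s) s /\ walk E (endv x s) y t.
Proof.
elim: s x => [|e s IH] x /=; first by [].
by case=> Ee [ex /IH [xs st]].
Qed.

Lemma walk_flatten_nseq x c j :
  walk E x x c -> walk E x x (flatten (nseq j c)).
Proof. by move=> xc; elim: j => //= j; apply: walk_cat xc. Qed.

Lemma walk_reverse (K : nat) :
  (forall e, E e -> exists t, walk E (eterm e) (einit e) t /\ (size t <= K)%N) ->
  forall s x y, walk E x y s -> exists t, walk E y x t /\ (size t <= K * size s)%N.
Proof.
move=> back; elim=> [|e s IH] x y /=; first by move=> ->; exists [::].
case=> Ee [<- /IH [t [yt st]]]; have [r [er sr]] := back e Ee.
exists (t ++ r); split; first exact: walk_cat yt er.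
by rewrite size_cat mulnS addnC leq_add.
Qed.

Lemma walk_take_drop n x y s :
  walk E x y s ->
  walk E x (endv x (take n s)) (take n s) /\ walk E (endv x (take n s)) y (drop n s).
Proof. by rewrite -{1}(cat_take_drop n s) => /walk_catE. Qed.

End Walks.

Lemma size_plabel (X Sigma : Type) (s : seq (edge X Sigma)) :
  size (plabel s) = size s.
Proof. exact: size_map. Qed.

Lemma plabel_cat (X Sigma : Type) (s t : seq (edge X Sigma)) :
  plabel (s ++ t) = plabel s ++ plabel t.
Proof. exact: map_cat. Qed.

Lemma avoids_cat (X : Type) (Sigma : eqType) (F : seq (seq Sigma))
    (s t : seq (edge X Sigma)) :
  avoids F (s ++ t) -> avoids F s /\ avoids F t.
Proof.
rewrite /avoids plabel_cat => st; split; apply: contra st => /hasP [w wF ws].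
  by apply/hasP; exists w => //; apply: infix_catr.
by apply/hasP; exists w => //; apply: infix_catl.
Qed.

Lemma exists_cycle_with_factor (X : Type) (Sigma : eqType)
    (E : set (edge X Sigma)) (F : seq (seq Sigma)) (K D : nat) :
  (forall e, E e -> exists t, walk E (eterm e) (einit e) t /\ (size t <= K)%N) ->
  all (fun w => size w != 0%N) F ->
  (forall x, exists y w, w \in F /\ (exists s, walk E x y s /\ (size s <= D)%N) /\
     (exists z s, walk E y z s /\ plabel s = w)) ->
  forall v, exists c, walk E v v c /\
    (0 < size c <= (D + \max_(w <- F) size w) * K.+1)%N /\ ~~ avoids F c.
Proof.
move=> back F_ne0 dense v.
have [y [w [wF [[u [vu su]] [z [q [yq qw]]]]]]] := dense v.
have vz : walk E v z (u ++ q) := walk_cat vu yq.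
have [r [zv sr]] := walk_reverse back vz.
have sq : size q = size w by rewrite -qw size_plabel.
have w_gt0 : (0 < size w)%N by rewrite lt0n (allP F_ne0).
have w_le : (size w <= \max_(w <- F) size w)%N by rewrite (leq_bigmax_seq _ wF).
exists ((u ++ q) ++ r); split; first exact: walk_cat vz zv.
split.
  have uq : (size u + size q <= D + \max_(w <- F) size w)%N by rewrite sq leq_add.
  move: sr; rewrite !size_cat sq in uq * => sr; apply/andP; split; first lia.
  move: (D + _)%N uq => B uq; nia.
rewrite /avoids negbK; apply/hasP; exists w => //.
by rewrite !plabel_cat qw -catA infix_infix.
Qed.

Section CycleInsertion.
Variables (X Sigma : Type) (M : nat) (cyc : X -> seq (edge X Sigma)).
Implicit Types (x y : X) (s : seq (edge X Sigma)) (bs : seq bool).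

Fixpoint insert_cycles x s bs : seq (edge X Sigma) :=
  if bs is b :: bs' then
    let x' := endv x (take M s) in
    take M s ++ (if b then cyc x' else [::]) ++ insert_cycles x' (drop M s) bs'
  else s.

Lemma size_insert_cycles_ge x s bs : (size s <= size (insert_cycles x s bs))%N.
Proof.
elim: bs x s => //= b bs IH x s.
rewrite -{1}(cat_take_drop M s) !size_cat leq_add2l.
by apply: leq_trans (IH _ _) _; apply: leq_addl.
Qed.

Lemma size_insert_cycles_le x s bs :
  (forall v, size (cyc v) <= M)%N ->
  (size (insert_cycles x s bs) <= size s + M * count id bs)%N.
Proof.
move=> cycM; elim: bs x s => [|b bs IH] x s /=; first by rewrite leq_addr.
set x' := endv x (take M s).
have cb : (size (if b then cyc x' else [::]) <= M * b)%N.
  by case: b; rewrite ?muln1 ?cycM.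
have := IH x' (drop M s); have := size_cat (take M s) (drop M s).
rewrite cat_take_drop !size_cat; lia.
Qed.

Lemma size_insert_cycles_window x s bs :
  (forall v, size (cyc v) <= M)%N -> (size bs * M <= size s)%N ->
  (size s <= size (insert_cycles x s bs) <= size s + size s)%N.
Proof.
move=> cycM bsM; rewrite size_insert_cycles_ge /=.
apply: leq_trans (size_insert_cycles_le _ _ _ cycM) _; rewrite leq_add2l.
by apply: leq_trans bsM; rewrite mulnC leq_mul2r count_size orbT.
Qed.

Lemma walk_insert_cycles (E : set (edge X Sigma)) x y s bs :
  (forall v, walk E v v (cyc v)) -> walk E x y s -> walk E x y (insert_cycles x s bs).
Proof.
move=> cycW; elim: bs x s => //= b bs IH x s.
move=> /(@walk_take_drop _ _ E M) [xs sy].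
apply: walk_cat xs _; case: b; last exact: IH.
exact: walk_cat (cycW _) (IH _ _ sy).
Qed.

Lemma take_insert_cycles x s bs :
  (size bs * M <= size s)%N -> take M (insert_cycles x s bs) = take M s.
Proof.
case: bs => //= b bs sM; rewrite take_size_cat // size_takel //.
by apply: leq_trans sM; rewrite leq_pmull.
Qed.

End CycleInsertion.

Section CycleInsertionInjective.
Variables (X : Type) (Sigma : eqType) (M : nat) (cyc : X -> seq (edge X Sigma)).
Variable F : seq (seq Sigma).
Implicit Types (x : X) (s : seq (edge X Sigma)) (bs : seq bool).
Hypotheses (cycM : forall v, (size (cyc v) <= M)%N) (cycF : forall v, ~~ avoids F (cyc v)).

Lemma cycle_cat_neq_insert_cycles v x s bs tl :
  avoids F s -> (size bs * M <= size s)%N ->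
  cyc v ++ tl <> insert_cycles M cyc x s bs.
Proof.
move=> sF sM e; have /negP := cycF v; apply.
have <- : take (size (cyc v)) s = cyc v.
  rewrite -(take_takel _ (cycM v)) -(take_insert_cycles cyc x sM) -e.
  by rewrite take_takel // take_size_cat.
have : avoids F (take (size (cyc v)) s ++ drop (size (cyc v)) s) by rewrite cat_take_drop.
by case/avoids_cat.
Qed.

Lemma insert_cycles_inj x s s' bs bs' :
  avoids F s -> avoids F s' -> size bs = size bs' ->
  (size bs * M <= size s)%N -> (size bs' * M <= size s')%N ->
  insert_cycles M cyc x s bs = insert_cycles M cyc x s' bs' -> s = s' /\ bs = bs'.
Proof.
elim: bs x s s' bs' => [|b bs IH] x s s' [|b' bs'] // sF s'F [size_bs] sM s'M /=.
have [_ sF2] : avoids F (take M s) /\ avoids F (drop M s).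
  by apply: avoids_cat; rewrite cat_take_drop.
have [_ s'F2] : avoids F (take M s') /\ avoids F (drop M s').
  by apply: avoids_cat; rewrite cat_take_drop.
have [Ms Ms'] : (M <= size s)%N /\ (M <= size s')%N.
  by move: sM s'M; rewrite /= !mulSn; split; lia.
have [dsM ds'M] : (size bs * M <= size (drop M s))%N /\ (size bs' * M <= size (drop M s'))%N.
  by move: sM s'M; rewrite /= !mulSn !size_drop; split; lia.
move=> e; have take_eq : take M s = take M s'.
  by move/(congr1 (take M)): e; rewrite !take_size_cat ?size_takel.
move/(congr1 (drop M)): e; rewrite -take_eq !drop_size_cat ?size_takel //.
have eq_s : drop M s = drop M s' -> s = s'.
  by move=> d; rewrite -(cat_take_drop M s) -(cat_take_drop M s') take_eq d.
case: b {sM}; case: b' {s'M} => /=.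
- by move/catl_inj/IH => /(_ sF2 s'F2 size_bs dsM ds'M) [/eq_s -> ->].
- by move/(cycle_cat_neq_insert_cycles s'F2 ds'M).
- by move/esym/(cycle_cat_neq_insert_cycles sF2 dsM).
- by move/IH => /(_ sF2 s'F2 size_bs dsM ds'M) [/eq_s -> ->].
Qed.

End CycleInsertionInjective.

Section PathWeights.
Variables (R : realType) (X Sigma : Type) (E : set (edge X Sigma)).
Variable p : edge X Sigma -> R.
Implicit Types (x y : X) (s t : seq (edge X Sigma)).

Lemma pathP_nil : Defs.pathP p [::] = 1.
Proof. exact: big_nil. Qed.

Lemma pathP_cat s t : Defs.pathP p (s ++ t) = Defs.pathP p s * Defs.pathP p t.
Proof. exact: big_cat. Qed.

Lemma pathP_ge_expr (a : R) x y s : 0 <= a -> (forall e, E e -> a <= p e) ->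
  walk E x y s -> a ^+ size s <= Defs.pathP p s.
Proof.
move=> a0 ap; elim: s x => [|e s IH] x /=; first by rewrite pathP_nil.
case=> Ee [_ /IH es]; rewrite /Defs.pathP big_cons exprS.
by rewrite ler_pM ?exprn_ge0 ?ap.
Qed.

Hypothesis p_ge0 : forall e, E e -> 0 <= p e.

Lemma pathP_ge0 x y s : walk E x y s -> 0 <= Defs.pathP p s.
Proof. by move/(pathP_ge_expr (lexx 0) p_ge0); apply: le_trans; rewrite exprn_ge0. Qed.

Lemma pathP_insert_cycles (b : R) M cyc x y s bs :
  0 <= b -> (forall v, b <= Defs.pathP p (cyc v)) -> walk E x y s ->
  Defs.pathP p s * b ^+ count id bs <= Defs.pathP p (insert_cycles M cyc x s bs).
Proof.
move=> b0 cycb; elim: bs x s => [|c bs IH] x s xy /=; first by rewrite mulr1.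
have [xs sy] := walk_take_drop M xy.
rewrite -{1}(cat_take_drop M s) !pathP_cat -!mulrA ler_wpM2l ?(pathP_ge0 xs) //.
case: c; last by rewrite pathP_nil mul1r add0n; apply: IH.
rewrite add1n exprS mulrCA ler_pM ?mulr_ge0 ?exprn_ge0 ?(pathP_ge0 sy) //.
exact: IH.
Qed.

End PathWeights.

Fixpoint bool_seqs (k : nat) : seq (seq bool) :=
  if k is k'.+1 then [seq false :: bs | bs <- bool_seqs k'] ++ [seq true :: bs | bs <- bool_seqs k']
  else [:: [::]].

Lemma bool_seqs_uniq k : uniq (bool_seqs k).
Proof.
have cons_inj c : injective (cons c : seq bool -> _) by move=> ? ? [].
elim: k => //= k IH; rewrite cat_uniq !(map_inj_uniq (cons_inj _)) IH /= andbT.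
by apply/hasPn => _ /mapP [bs _ ->]; apply/mapP => -[cs _ []].
Qed.

Lemma size_bool_seqs k bs : bs \in bool_seqs k -> size bs = k.
Proof.
elim: k bs => [|k IH] bs /=; first by rewrite inE => /eqP ->.
by rewrite mem_cat => /orP [] /mapP [cs /IH <- ->].
Qed.

Lemma sum_bool_seqs (R : comPzSemiRingType) (b : R) k :
  \sum_(bs <- bool_seqs k) b ^+ count id bs = (1 + b) ^+ k.
Proof.
elim: k => [|k IH] /=; first by rewrite big_seq1.
rewrite big_cat !big_map /= exprS mulrDl mul1r IH; congr (_ + _).
by rewrite -IH mulr_sumr; apply: eq_bigr => bs _; rewrite add1n exprS.
Qed.

Lemma sum_seq_partition (R : nmodType) (I J : eqType) (r : seq I) (js : seq J)
    (h : I -> J) (G : I -> R) :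
  uniq js -> {subset map h r <= js} ->
  \sum_(i <- r) G i = \sum_(j <- js) \sum_(i <- r | h i == j) G i.
Proof.
move=> ujs hr; under [RHS]eq_bigr => j _ do rewrite big_mkcond.
rewrite exchange_big /= big_seq [RHS]big_seq; apply: eq_bigr => i ir.
have hi : h i \in js by apply: hr; apply: map_f.
rewrite -big_mkcond /= (big_rem (h i)) // eqxx big1_seq ?Monoid.mulm1 //.
by move=> j /andP [/eqP <-]; rewrite mem_rem_uniqF.
Qed.

Lemma esum_ge_seq (R : realType) (T : choiceType) (S : set T) (a : T -> \bar R)
    (l : seq T) :
  uniq l -> (forall t, t \in l -> S t) -> (\sum_(t <- l) a t <= \esum_(t in S) a t)%E.
Proof.
move=> ul lS; apply: esum_ge; exists [set` l]; last by rewrite fsbig_seq.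
by split; [exact: finite_seq | move=> t; apply: lS].
Qed.

Lemma esum_le_seq (R : realType) (T : choiceType) (S : set T) (a : T -> \bar R)
    (z : \bar R) :
  (forall l : seq T, uniq l -> (forall t, t \in l -> S t) -> (\sum_(t <- l) a t <= z)%E) ->
  (\esum_(t in S) a t <= z)%E.
Proof.
move=> lz; apply: ge_ereal_sup => _ [Y [finY YS] <-].
rewrite fsbig_finite //; apply: lz; first exact: finmap.fset_uniq.
by move=> t; rewrite (in_fset_set finY) inE; apply: YS.
Qed.

Lemma sum_pathP_nil_le1 (R : realType) (X Sigma : choiceType) (p : edge X Sigma -> R)
    (L : seq (seq (edge X Sigma))) :
  uniq L -> (forall s, s \in L -> s = [::]) -> \sum_(s <- L) Defs.pathP p s <= 1.
Proof.
case: L => [|s [|t L]] uL L0; first by rewrite big_nil.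
  by rewrite big_seq1 (L0 s (mem_head _ _)) pathP_nil.
have tL : t \in [:: s, t & L] by rewrite !inE eqxx orbT.
by move: uL; rewrite (L0 s (mem_head _ _)) (L0 t tL) => /andP [/negP []]; apply: mem_head.
Qed.

Lemma sum_pathP_cons (R : realType) (X Sigma : choiceType) (p : edge X Sigma -> R)
    (e : edge X Sigma) (L : seq (seq (edge X Sigma))) :
  (forall s, s \in L -> s = e :: behead s) ->
  \sum_(s <- L) Defs.pathP p s = p e * \sum_(s <- map behead L) Defs.pathP p s.
Proof.
move=> Le; rewrite big_map mulr_sumr big_seq [RHS]big_seq.
by apply: eq_bigr => s /Le {1}->; rewrite /Defs.pathP big_cons.
Qed.

Section Substochastic.
Variables (R : realType) (X Sigma : choiceType) (E : set (edge X Sigma)).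
Variable p : edge X Sigma -> R.
Hypothesis p_ge0 : forall e, E e -> 0 <= p e.
Hypothesis p_out_le1 :
  forall x, (\esum_(e in [set e | E e /\ einit e = x]) (p e)%:E <= 1)%E.

Lemma sum_pathP_walks_le1 m x (L : seq (seq (edge X Sigma))) :
  uniq L -> (forall s, s \in L -> (exists y, walk E x y s) /\ size s = m) ->
  \sum_(s <- L) Defs.pathP p s <= 1.
Proof.
elim: m x L => [|m IH] x L uL hL.
  by apply: (sum_pathP_nil_le1 p uL) => s /hL [_ /size0nil].
case: L uL hL => [|s0 L0] uL hL; first by rewrite big_nil.
have [e0 _] : exists e0 s', s0 = e0 :: s'.
  by case: s0 {uL hL}(hL s0 (mem_head _ _)) => [[_ //]|e0 s'] _; exists e0, s'.
set L := s0 :: L0 in uL hL *; pose hd s := head e0 s.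
have hL' s : s \in L -> [/\ E (hd s), einit (hd s) = x, s = hd s :: behead s,
    exists y, walk E (eterm (hd s)) y (behead s) & size (behead s) = m].
  by move=> /hL [[y]]; case: s => //= e s [Ee [ex es]] [sm]; split=> //; exists y.
rewrite (@sum_seq_partition _ _ _ L _ hd _ (undup_uniq (map hd L))); last first.
  by move=> e; rewrite mem_undup.
apply: (@le_trans _ _ (\sum_(e <- undup (map hd L)) p e)); last first.
  rewrite -lee_fin -sumEFin; apply: le_trans (p_out_le1 x).
  apply: esum_ge_seq; first exact: undup_uniq.
  by move=> e; rewrite mem_undup => /mapP [s /hL' [Ee ex _ _ _] ->].
rewrite big_seq [leRHS]big_seq; apply: ler_sum => e; rewrite mem_undup.
case/mapP=> s1 s1L ->; have [Ee _ _ _ _] := hL' s1 s1L.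
have L1E s : s \in [seq s <- L | hd s == hd s1] -> s = hd s1 :: behead s.
  by rewrite mem_filter => /andP [/eqP <- /hL' []].
rewrite -big_filter (sum_pathP_cons p L1E) -[leRHS]mulr1 ler_wpM2l ?p_ge0 //.
apply: (IH (eterm (hd s1))).
  rewrite map_inj_in_uniq ?filter_uniq // => s t /L1E sE /L1E tE st.
  by rewrite sE tE st.
move=> _ /mapP [s sL1 ->]; move: (sL1); rewrite mem_filter => /andP [/eqP <- /hL'].
by case.
Qed.

End Substochastic.

Section RootLimsup.
Variable R : realType.
Implicit Types (u : nat -> \bar R) (A Q : nat -> R).

Lemma limn_esup_le_eventually u (z : \bar R) N :
  (forall n, (N <= n)%N -> (u n <= z)%E) -> (limn_esup u <= z)%E.
Proof.
move=> uz; apply: (@le_trans _ _ (ereal_sup [set u n | n in [set n | (N <= n)%N]])).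
  by apply: ereal_inf_lbound; exists [set n | (N <= n)%N] => //; apply: nbhs_infty_ge.
by apply: ge_ereal_sup => _ [n Nn <-]; apply: uz.
Qed.

Lemma limn_esup_lt_eventually u (r : \bar R) :
  (limn_esup u < r)%E -> exists N, forall n, (N <= n)%N -> (u n < r)%E.
Proof.
move=> /ereal_inf_lt [_ [V [N _ NV] <-]] Vr; exists N => n Nn.
by apply: le_lt_trans Vr; apply: ereal_sup_ubound; exists n => //; apply: NV.
Qed.

Lemma limn_esup_ge_frequently u (c : \bar R) :
  (forall N, exists2 n, (N <= n)%N & (c <= u n)%E) -> (c <= limn_esup u)%E.
Proof.
move=> freq; apply: le_ereal_inf_tmp => _ [V [N _ NV] <-].
have [n Nn cn] := freq N; apply: le_trans cn _.
by apply: ereal_sup_ubound; exists n => //; apply: NV.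
Qed.

Lemma powR_expr_inv (x : R) n : 0 <= x -> (0 < n)%N -> (x ^+ n) `^ n%:R^-1 = x.
Proof.
move=> x0 n0; rewrite -powR_mulrn // -powRrM mulfV ?powRr1 //.
by rewrite pnatr_eq0 -lt0n.
Qed.

Lemma expr_powR_inv (x : R) n : 0 <= x -> (0 < n)%N -> (x `^ n%:R^-1) ^+ n = x.
Proof.
move=> x0 n0; rewrite -powR_mulrn ?powR_ge0 // -powRrM mulVf ?powRr1 //.
by rewrite pnatr_eq0 -lt0n.
Qed.

Lemma expr_powR_inv_le (x : R) M n : 1 <= x -> (0 < M)%N ->
  (x `^ M%:R^-1) ^+ n <= x ^+ (n %/ M).+1.
Proof.
move=> x1 M0; have x0 : 0 <= x by apply: le_trans x1.
rewrite -(powR_mulrn _ (powR_ge0 _ _)) -powRrM -(powR_mulrn _ x0).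
rewrite ler_powR // mulrC ler_pdivrMr ?ltr0n // -natrM ler_nat.
exact: ltnW (ltn_ceil _ M0).
Qed.

Lemma powR_inv_gt1 (x : R) M : 1 < x -> (0 < M)%N -> 1 < x `^ M%:R^-1.
Proof.
move=> x1 M0; have x0 : 0 <= x by apply: le_trans (ltW x1).
rewrite ltNge; apply/negP => /(exprn_ile1 M (powR_ge0 _ _)).
by rewrite expr_powR_inv // leNgt x1.
Qed.

Lemma ler_bernoulli (d : R) n : 0 <= d -> 1 + n%:R * d <= (1 + d) ^+ n.
Proof.
move=> d0; elim: n => [|n IH]; first by rewrite mul0r addr0.
rewrite exprS; apply: le_trans (ler_wpM2l _ IH); last by rewrite addr_ge0.
have : 0 <= d * (n%:R * d) by rewrite !mulr_ge0.
rewrite -natr1; lra.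
Qed.

(* Bernoulli's inequality for [sqrt w] gives [w ^+ n >= (1 + n (sqrt w - 1)) ^+ 2],
   which is quadratic in [n]. *)
Lemma linear_le_expr_eventually (C w : R) : 0 <= C -> 1 < w ->
  exists N, forall n, (N <= n)%N -> C * n.+1%:R <= w ^+ n.
Proof.
move=> C0 w1; set d := Num.sqrt w - 1.
have d0 : 0 < d by rewrite subr_gt0 -sqrtr1 ltr_sqrt //; lra.
have wE : w = (1 + d) ^+ 2 by rewrite /d addrC subrK sqr_sqrtr //; lra.
set q := 2 * C / d ^+ 2.
have q0 : 0 <= q by rewrite divr_ge0 ?exprn_ge0 //; lra.
exists (Num.Def.archi_bound q).+1 => n Nn.
have n1 : 1 <= n%:R :> R by rewrite ler1n; apply: leq_trans Nn.
have qn : q < n%:R.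
  by apply: lt_le_trans (archi_boundP q0) _; rewrite ler_nat ltnW.
have Cn : 2 * C <= n%:R * d ^+ 2.
  by move: qn; rewrite ltr_pdivrMr ?exprn_gt0 // => /ltW.
rewrite wE -exprM mulnC exprM -natr1.
have := ler_bernoulli n (ltW d0); move: ((1 + d) ^+ n) => t nt.
have nd0 : 0 <= n%:R * d by rewrite mulr_ge0 // ltW.
have : C * (n%:R + 1) <= n%:R * (n%:R * d ^+ 2) by nra.
rewrite expr2; nra.
Qed.

Lemma root_limsup_le_of_bound A (z C : R) N :
  (forall n, 0 <= A n) -> 0 <= z -> 0 <= C ->
  (forall n, (N <= n)%N -> A n <= C * n.+1%:R * z ^+ n) ->
  (root_limsup (fun n => (A n)%:E) <= z%:E)%E.
Proof.
move=> A0 z0 C0 Az; apply/lee_addgt0Pr => e e0.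
set w := 1 + e / (z + 1).
have ez : 0 < e / (z + 1) by rewrite divr_gt0 //; lra.
have w1 : 1 < w by rewrite /w; lra.
have [N' N'w] := linear_le_expr_eventually C0 w1.
apply: (limn_esup_le_eventually (N := maxn (maxn N N') 1)) => n.
rewrite !geq_max => /andP [/andP [Nn N'n] n1].
rewrite poweR_EFin -EFinD lee_fin.
have zw0 : 0 <= z * w by rewrite mulr_ge0 //; lra.
apply: (@le_trans _ _ (((z * w) ^+ n) `^ n%:R^-1)); last first.
  rewrite powR_expr_inv //; suff : z * (e / (z + 1)) <= e by rewrite /w; lra.
  by rewrite mulrA ler_pdivrMr; nra.
apply: ge0_ler_powR; rewrite ?nnegrE ?exprn_ge0 //.
apply: le_trans (Az n Nn) _; rewrite exprMn mulrC.
by rewrite ler_wpM2l ?exprn_ge0 ?N'w.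
Qed.

Lemma root_limsup_lt_bound Q (r : R) : (forall m, 0 <= Q m) -> 0 <= r ->
  (root_limsup (fun m => (Q m)%:E) < r%:E)%E ->
  exists N, forall m, (N <= m)%N -> Q m <= r ^+ m.
Proof.
move=> Q0 r0 /limn_esup_lt_eventually [N Nr]; exists (maxn N 1) => m.
rewrite geq_max => /andP [Nm m1]; move: (Nr m Nm); rewrite poweR_EFin lte_fin => Qr.
by rewrite -(expr_powR_inv (Q0 m) m1) ler_pXn2r ?nnegrE ?powR_ge0 // ltW.
Qed.

Lemma root_limsup_window_le Q A (c : nat) (C g r : R) :
  (forall m, 0 <= Q m <= 1) -> (forall n, 0 <= A n) -> 0 < C -> 0 < g -> 0 <= r ->
  (forall n, C * g ^+ n * A n <= \sum_(n <= m < n + c + n.+1) Q m) ->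
  (root_limsup (fun m => (Q m)%:E) < r%:E)%E ->
  (root_limsup (fun n => (A n)%:E) <= (r / g)%:E)%E.
Proof.
move=> Q01 A0 C0 g0 r0 window Qr.
have [N QN] := root_limsup_lt_bound (fun m => (andP (Q01 m)).1) r0 Qr.
(* Since [Q <= 1], capping [r] at [1] keeps the bound and makes [s ^+ m] nonincreasing. *)
set s := Num.min r 1.
have s0 : 0 <= s by rewrite le_min r0 ler01.
have s1 : s <= 1 by rewrite ge_min lexx orbT.
have Qs m n : (N <= n <= m)%N -> Q m <= s ^+ n.
  case/andP=> Nn nm; apply: (le_trans _ (_ : s ^+ m <= s ^+ n)); last first.
    by rewrite ler_wiXn2l.
  have [_ Q1] := andP (Q01 m); rewrite /s minEle; case: ifP => _; last by rewrite expr1n.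
  by apply: QN; apply: leq_trans nm.
apply: (@le_trans _ _ (s / g)%:E); last by rewrite lee_fin ler_pM2r ?invr_gt0 // ge_min lexx.
apply: (root_limsup_le_of_bound (C := c.+1%:R / C) (N := N)) => //.
- by rewrite divr_ge0 // ltW.
- by rewrite divr_ge0 // ltW.
move=> n Nn; rewrite -(ler_pM2l (_ : 0 < C * g ^+ n)) ?mulr_gt0 ?exprn_gt0 //.
apply: le_trans (window n) _.
apply: (@le_trans _ _ (\sum_(n <= m < n + c + n.+1) s ^+ n)).
  by rewrite big_nat [leRHS]big_nat; apply: ler_sum => m /andP [nm _]; apply: Qs; rewrite Nn.
have -> : C * g ^+ n * (c.+1%:R / C * n.+1%:R * (s / g) ^+ n) = (c.+1 * n.+1)%:R * s ^+ n.
  by rewrite expr_div_n natrM; field; rewrite expf_neq0 ?lt0r_neq0.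
rewrite sumr_const_nat -[s ^+ n *+ _]mulr_natl ler_wpM2r ?exprn_ge0 // ler_nat; nia.
Qed.

End RootLimsup.

Section PathSums.
Variables (R : realType) (X : choiceType) (Sigma : finType) (E : set (edge X Sigma)).
Variable p : edge X Sigma -> R.
Implicit Types (x y : X) (s : seq (edge X Sigma)) (L : seq (seq (edge X Sigma))).

Lemma pn_ge_sum m x y L : uniq L -> (forall s, s \in L -> walk E x y s /\ size s = m) ->
  ((\sum_(s <- L) Defs.pathP p s)%:E <= pn E p m x y)%E.
Proof. by move=> uL hL; rewrite -sumEFin; apply: esum_ge_seq => // s /hL. Qed.

Lemma pn_ge_pathP x y s : walk E x y s -> ((Defs.pathP p s)%:E <= pn E p (size s) x y)%E.
Proof.
move=> xy; have := @pn_ge_sum (size s) x y [:: s]; rewrite big_seq1; apply => // t.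
by rewrite inE => /eqP ->.
Qed.

Lemma sum_pathP_le_sum_pn x y L (js : seq nat) :
  uniq L -> uniq js -> (forall s, s \in L -> walk E x y s /\ size s \in js) ->
  ((\sum_(s <- L) Defs.pathP p s)%:E <= \sum_(m <- js) pn E p m x y)%E.
Proof.
move=> uL ujs hL; rewrite (@sum_seq_partition _ _ _ L js size _ ujs); last first.
  by move=> _ /mapP [s /hL [_ sjs] ->].
rewrite -sumEFin; apply: lee_sum => m _; rewrite -big_filter.
apply: pn_ge_sum; first exact: filter_uniq.
by move=> s; rewrite mem_filter => /andP [/eqP <- /hL []].
Qed.

Hypothesis p_ge0 : forall e, E e -> 0 <= p e.

Lemma pn_ge0 m x y : (0 <= pn E p m x y)%E.
Proof. by apply: esum_ge0 => s [xy _]; rewrite lee_fin (pathP_ge0 p_ge0 xy). Qed.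

Lemma rhoP_ge (a : R) x y u c : 0 <= a -> (forall e, E e -> a <= p e) ->
  walk E x y u -> walk E y y c -> (0 < size c)%N -> (a%:E <= rhoP E p x y)%E.
Proof.
move=> a0 ap xy yy c0; apply: limn_esup_ge_frequently => N.
set n := (size u + N.+1 * size c)%N; exists n.
  by rewrite /n (leq_trans _ (leq_addl _ _)) // (leq_trans _ (leq_pmulr _ c0)).
have n0 : (0 < n)%N by rewrite /n addn_gt0 muln_gt0 c0 orbT.
have xyn : walk E x y (u ++ flatten (nseq N.+1 c)).
  exact: walk_cat xy (walk_flatten_nseq N.+1 yy).
have sn : size (u ++ flatten (nseq N.+1 c)) = n.
  by rewrite size_cat size_flatten /shape map_nseq sumn_nseq mulnC.
rewrite -{1}(powR_expr_inv a0 n0) -poweR_EFin.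
apply: gt0_ler_poweR; rewrite ?invr_ge0 ?ler0n ?in_itv /= ?leey ?pn_ge0 ?lee_fin ?exprn_ge0 //.
rewrite -sn; apply: le_trans (pn_ge_pathP xyn); rewrite lee_fin.
exact: pathP_ge_expr a0 ap xyn.
Qed.

Hypothesis p_out_le1 :
  forall x, (\esum_(e in [set e | E e /\ einit e = x]) (p e)%:E <= 1)%E.

Lemma pn_ge0_le1 m x y : (0 <= pn E p m x y <= 1)%E.
Proof.
rewrite pn_ge0; apply: esum_le_seq => L uL hL; rewrite sumEFin lee_fin.
apply: (sum_pathP_walks_le1 p_ge0 p_out_le1 (m := m) (x := x) uL).
by move=> s /hL [xy sm]; split=> //; exists y.
Qed.

Lemma pFn_ge0_le1 F n x y : (0 <= pFn E p F n x y <= 1)%E.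
Proof.
apply/andP; split.
  by apply: esum_ge0 => s [xy _]; rewrite lee_fin (pathP_ge0 p_ge0 xy).
apply: esum_le_seq => L uL hL; rewrite sumEFin lee_fin.
apply: (sum_pathP_walks_le1 p_ge0 p_out_le1 (m := n) (x := x) uL).
by move=> s /hL [xy [sn _]]; split=> //; exists y.
Qed.

Lemma rhoP_le1 x y : (rhoP E p x y <= 1)%E.
Proof.
apply: (limn_esup_le_eventually (N := 0)) => n _; rewrite -(poweR1r n%:R^-1).
have /andP [pn0 pn1] := pn_ge0_le1 n x y.
by apply: gt0_ler_poweR; rewrite ?invr_ge0 ?ler0n ?in_itv /= ?leey ?pn0 ?pn1 ?lee01.
Qed.

End PathSums.

Lemma fine_ge0_le1 (R : realType) (x : \bar R) :
  (0 <= x <= 1)%E -> x = (fine x)%:E /\ 0 <= fine x <= 1.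
Proof. by case: x => [r| |] /andP [] //; rewrite !lee_fin => r0 r1; rewrite r0 r1. Qed.



Section AvoidingPathCounting.
Variables (R : realType) (X : choiceType) (Sigma : finType) (E : set (edge X Sigma)).
Variables (p : edge X Sigma -> R) (F : seq (seq Sigma)) (a : R) (M : nat).
Variable cyc : X -> seq (edge X Sigma).
Hypotheses (a_gt0 : 0 < a) (a_le1 : a <= 1) (p_ge : forall e, E e -> a <= p e).
Hypotheses (cycW : forall v, walk E v v (cyc v)) (cycM : forall v, (size (cyc v) <= M)%N).
Hypothesis cycF : forall v, ~~ avoids F (cyc v).

Let a_ge0 : 0 <= a := ltW a_gt0.
Let p_ge0 e : E e -> 0 <= p e. Proof. by move/p_ge; apply: le_trans. Qed.

Lemma pathP_cycle_ge v : a ^+ M <= Defs.pathP p (cyc v).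
Proof.
apply: le_trans (pathP_ge_expr a_ge0 p_ge (cycW v)).
by rewrite ler_wiXn2l ?cycM.
Qed.

Lemma pathP_insert_cycles_cat x0 y0 x y u v s bs :
  walk E x0 x u -> walk E y y0 v -> walk E x y s ->
  a ^+ (size u + size v) * (a ^+ M) ^+ count id bs * Defs.pathP p s
    <= Defs.pathP p (u ++ insert_cycles M cyc x s bs ++ v).
Proof.
move=> x0x yy0 xy; have aM0 : 0 <= a ^+ M by rewrite exprn_ge0.
have Pins := pathP_insert_cycles p_ge0 M bs aM0 pathP_cycle_ge xy.
have [Ps0 bc0] := (pathP_ge0 p_ge0 xy, exprn_ge0 (count id bs) aM0).
rewrite !pathP_cat exprD.
have -> : a ^+ size u * a ^+ size v * (a ^+ M) ^+ count id bs * Defs.pathP p s =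
  a ^+ size u * (Defs.pathP p s * (a ^+ M) ^+ count id bs * a ^+ size v) by ring.
apply: (ler_pM _ _ (pathP_ge_expr a_ge0 p_ge x0x)); rewrite ?mulr_ge0 ?exprn_ge0 //.
by apply: (ler_pM _ _ Pins (pathP_ge_expr a_ge0 p_ge yy0)); rewrite ?mulr_ge0 ?exprn_ge0.
Qed.

Lemma uniq_insert_cycles_cat x u v n (L : seq (seq (edge X Sigma))) :
  uniq L -> (forall s, s \in L -> size s = n /\ avoids F s) ->
  uniq [seq u ++ insert_cycles M cyc x s bs ++ v | s <- L, bs <- bool_seqs (n %/ M)].
Proof.
move=> uL hL; apply: allpairs_uniq => //; first exact: bool_seqs_uniq.
move=> [s bs] [s' bs'] /allpairsP [[t cs] [/= tL /size_bool_seqs csk [-> ->]]].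
move=> /allpairsP [[t' cs'] [/= t'L /size_bool_seqs cs'k [-> ->]]] /= /cat3_inj.
have [[tn tF] [t'n t'F]] := (hL t tL, hL t' t'L).
have [kt kt'] : (n %/ M * M <= size t)%N /\ (n %/ M * M <= size t')%N.
  by rewrite tn t'n leq_divM.
by case/(insert_cycles_inj cycM cycF tF t'F) => [|||-> ->] //; rewrite ?csk ?cs'k.
Qed.

Lemma sum_avoiding_le_window x0 y0 x y u v n (L : seq (seq (edge X Sigma))) :
  walk E x0 x u -> walk E y y0 v -> uniq L ->
  (forall s, s \in L -> walk E x y s /\ size s = n /\ avoids F s) ->
  ((a ^+ (size u + size v) * (1 + a ^+ M) ^+ (n %/ M) * \sum_(s <- L) Defs.pathP p s)%:E
    <= \sum_(n <= m < n + (size u + size v) + n.+1) pn E p m x0 y0)%E.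
Proof.
move=> x0x yy0 uL hL.
set ext := [seq u ++ insert_cycles M cyc x s bs ++ v | s <- L, bs <- bool_seqs (n %/ M)].
apply: (@le_trans _ _ (\sum_(q <- ext) Defs.pathP p q)%:E).
  rewrite lee_fin big_allpairs_dep /= mulr_sumr big_seq [leRHS]big_seq.
  apply: ler_sum => s /hL [xy _]; rewrite -sum_bool_seqs mulr_sumr mulr_suml.
  by apply: ler_sum => bs _; apply: pathP_insert_cycles_cat x0x yy0 xy.
apply: sum_pathP_le_sum_pn; first by apply: uniq_insert_cycles_cat => // s /hL [].
  exact: iota_uniq.
move=> _ /allpairsP [[s bs] [/= /hL [xy [sn _]] /size_bool_seqs bsk ->]]; split.
  exact: walk_cat x0x (walk_cat (walk_insert_cycles _ _ cycW xy) yy0).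
have bsM : (size bs * M <= size s)%N by rewrite bsk sn leq_divM.
have /andP [] := size_insert_cycles_window x cycM bsM.
rewrite mem_index_iota !size_cat sn; lia.
Qed.

Lemma pFn_le_window x0 y0 x y u v n :
  walk E x0 x u -> walk E y y0 v ->
  ((a ^+ (size u + size v) * (1 + a ^+ M) ^+ (n %/ M))%:E * pFn E p F n x y
    <= \sum_(n <= m < n + (size u + size v) + n.+1) pn E p m x0 y0)%E.
Proof.
move=> x0x yy0; set coef := _ * _.
have coef_gt0 : 0 < coef by rewrite mulr_gt0 ?exprn_gt0 ?ltr_wpDr ?exprn_ge0.
rewrite muleC -lee_pdivlMr //; apply: esum_le_seq => L uL hL.
rewrite lee_pdivlMr // sumEFin -EFinM mulrC.
exact: sum_avoiding_le_window x0x yy0 uL (fun s sL => hL s sL).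
Qed.

Hypothesis p_out_le1 :
  forall x, (\esum_(e in [set e | E e /\ einit e = x]) (p e)%:E <= 1)%E.

Lemma rhoPF_le_rhoP_div x0 y0 x y u v (rho : R) :
  (0 < M)%N -> walk E x0 x u -> walk E y y0 v -> rhoP E p x0 y0 = rho%:E ->
  (rhoPF E p F x y <= (rho / (1 + a ^+ M) `^ M%:R^-1)%:E)%E.
Proof.
move=> M0 x0x yy0 rhoE; set b := a ^+ M; set g := (1 + b) `^ M%:R^-1.
set c := (size u + size v)%N.
have b0 : 0 <= b by rewrite exprn_ge0.
have b1 : 0 < 1 + b by rewrite ltr_wpDr.
have g_gt0 : 0 < g by rewrite powR_gt0.
pose Q m := fine (pn E p m x0 y0); pose A n := fine (pFn E p F n x y).
have QE m : pn E p m x0 y0 = (Q m)%:E /\ 0 <= Q m <= 1.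
  exact: fine_ge0_le1 (pn_ge0_le1 p_ge0 p_out_le1 m x0 y0).
have AE n : pFn E p F n x y = (A n)%:E /\ 0 <= A n <= 1.
  exact: fine_ge0_le1 (pFn_ge0_le1 p_ge0 p_out_le1 F n x y).
have rhoQ : rhoP E p x0 y0 = root_limsup (fun m => (Q m)%:E).
  by rewrite /rhoP; congr root_limsup; apply: funext => m; rewrite (QE m).1.
have rho0 : 0 <= rho.
  rewrite -lee_fin -rhoE; apply: limn_esup_ge_frequently => N.
  by exists N => //; apply: poweR_ge0.
have -> : rhoPF E p F x y = root_limsup (fun n => (A n)%:E).
  by rewrite /rhoPF; congr root_limsup; apply: funext => n; rewrite (AE n).1.
apply/lee_addgt0Pr => e e0; rewrite -EFinD.
have -> : rho / g + e = (rho + e * g) / g by field; rewrite lt0r_neq0.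
apply: (root_limsup_window_le (Q := Q) (c := c) (C := a ^+ c / (1 + b))) => //.
- by move=> m; case: (QE m).
- by move=> n; case: (AE n) => _ /andP [].
- by rewrite divr_gt0 ?exprn_gt0.
- by rewrite addr_ge0 ?mulr_ge0 // ltW.
- move=> n; apply: (@le_trans _ _ (a ^+ c * (1 + b) ^+ (n %/ M) * A n)).
    rewrite ler_wpM2r ?(andP (AE n).2).1 // mulrAC -mulrA ler_wpM2l ?exprn_ge0 //.
    by rewrite ler_pdivrMr // -exprSr expr_powR_inv_le // lerDl.
  rewrite -lee_fin EFinM -(AE n).1; apply: le_trans (pFn_le_window n x0x yy0) _.
  by rewrite -sumEFin; apply: lee_sum => m _; rewrite (QE m).1.
by rewrite -rhoQ rhoE lte_fin ltr_pwDr ?mulr_gt0.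
Qed.

Lemma sup_rhoPF_lt_rhoP x0 y0 :
  (forall x y, exists s, walk E x y s) -> (0 < size (cyc y0))%N ->
  (ereal_sup [set rhoPF E p F xy.1 xy.2 | xy in [set: X * X]] < rhoP E p x0 y0)%E.
Proof.
move=> conn cyc_gt0; have M_gt0 : (0 < M)%N := leq_trans cyc_gt0 (cycM y0).
have [u0 x0y0] := conn x0 y0.
have rho_ge := rhoP_ge p_ge0 a_ge0 p_ge x0y0 (cycW y0) cyc_gt0.
have rho01 : (0 <= rhoP E p x0 y0 <= 1)%E.
  by rewrite rhoP_le1 // andbT; apply: le_trans rho_ge; rewrite lee_fin.
have [rhoE _] := fine_ge0_le1 rho01.
set rho := fine _ in rhoE.
have rho_gt0 : 0 < rho by apply: lt_le_trans a_gt0 _; rewrite -lee_fin -rhoE.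
have g_gt1 : 1 < (1 + a ^+ M) `^ M%:R^-1 by rewrite powR_inv_gt1 // ltrDl exprn_gt0.
apply: (@le_lt_trans _ _ (rho / (1 + a ^+ M) `^ M%:R^-1)%:E).
  apply: ge_ereal_sup => _ [[x y] _ <-]; have [u x0x] := conn x0 x.
  have [v yy0] := conn y y0; exact: rhoPF_le_rhoP_div M_gt0 x0x yy0 rhoE.
by rewrite rhoE lte_fin ltr_pdivrMr ?ltr_pMr // (lt_trans ltr01).
Qed.

End AvoidingPathCounting.

Theorem mainTheorem16 (R : realType) (X : choiceType) (Sigma : finType)
  (E : set (edge X Sigma)) (p : edge X Sigma -> R) (alpha : R)
  (F : seq (seq Sigma)) :
  uniformly_connected E ->
  0 < alpha ->
  (forall e, E e -> alpha <= p e) ->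
  (forall x : X,
     (\esum_(e in [set e | E e /\ einit e = x]) (p e)%:E <= 1)%E) ->
  F != [::] ->
  all (fun w => size w != 0%N) F ->
  rel_dense E F ->
  forall x0 y0 : X,
    (ereal_sup [set rhoPF E p F xy.1 xy.2 | xy in [set: X * X]]
       < rhoP E p x0 y0)%E.
Proof.
move=> [conn [K back]] alpha_gt0 p_ge_alpha p_out_le1 _ F_ne0 [D dense] x0 y0.
have a_gt0 : 0 < Num.min alpha 1 by rewrite lt_min alpha_gt0 ltr01.
have a_le1 : Num.min alpha 1 <= 1 by rewrite ge_min lexx orbT.
have p_ge e : E e -> Num.min alpha 1 <= p e by move=> /p_ge_alpha pe; rewrite ge_min pe.
have [cyc cycP] := choice (exists_cycle_with_factor back F_ne0 dense).
have cycW v : walk E v v (cyc v) by case: (cycP v).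
have cycM v := (andP (cycP v).2.1).2.
have cycF v : ~~ avoids F (cyc v) by case: (cycP v) => _ [].
exact: sup_rhoPF_lt_rhoP a_gt0 a_le1 p_ge cycW cycM cycF p_out_le1 x0 y0 conn
  (andP (cycP y0).2.1).1.
Qed.
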